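(* Let $G$ be an optimal digraph. Then $\alpha_G$ is finite, and for every vertex $v$ of $G$, $\alpha_G - 1 \leq \delta^+(v) \leq \beta_G$ and $\alpha_G - 1 \leq \delta^-(v) \leq \beta_G$.
   Context: Digraphs are finite, loopless, with at most one edge $uv$ per ordered pair. $\delta^+(v)=|\{u: vu\in E(G)\}|$, $\delta^-(v)=|\{u:uv\in E(G)\}|$. A digraph is $2$-free if no distinct $u,v$ have both $uv,vu$ as edges. A circular interval digraph is a digraph together with a fixed arrangement of its vertices in a circle such that for all distinct $u,v,w$ in clockwise order with $uw\in E(G)$, also $uv,vw\in E(G)$. For distinct $u,v$, $d(u,v) = 1 + |\{w: u,w,v \text{ distinct, in clockwise order}\}|$; this is the length of the ordered pair $uv$. A non-edge is an ordered pair $(u,v)$ of distinct vertices with neither $uv$ nor $vu$ an edge; its length is $d(u,v)$. $\alpha_G$ is the minimum length of a non-edge ($\infty$ if none) and $\beta_G$ the maximum length of an edge ($0$ if none). $\xi(G)$ is the number of pairs $(uv,(w,x))$ with $uv\in E(G)$, $(w,x)$ a non-edge, $d(u,v)>d(w,x)$. $\tilde P_3(G)$ is the number of triples $(a,b,c)$ of distinct vertices with $ab,bc\in E(G)$ and $ac,ca\notin E(G)$. For fixed $n\ge 4$, $G$ is optimal if it is a $2$-free circular interval digraph on $n$ vertices maximizing $\tilde P_3$ among all such digraphs and, subject to this, minimizing $\xi(G)$. *)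

(* Vertices of a digraph on n vertices are 'I_n, arranged
   on the circle in the clockwise order 0, 1, ..., n-1. *)
From mathcomp Require Import all_boot all_order.
Set Implicit Arguments. Unset Strict Implicit. Unset Printing Implicit Defensive.

Section Digraphs.
Variable n : nat.
Implicit Types (e : rel 'I_n) (u v w : 'I_n).

(* length d(u,v) of the ordered pair uv: 1 + #vertices strictly between u
   and v clockwise, i.e. (v - u) mod n *)
Definition dist u v : nat := (v + n - u) %% n.

Definition cw u v w : bool :=
  [&& u != v, v != w, u != w & dist u v < dist u w].

Definition loopless e : Prop := forall v, ~~ e v v.

Definition two_free e : Prop := forall u v, u != v -> ~~ (e u v && e v u).

Definition circ_interval e : Prop :=
  forall u v w, cw u v w -> e u w -> e u v && e v w.

(* 2-free circular interval digraph (with the fixed circular arrangement) *)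
Definition valid e : Prop := [/\ loopless e, two_free e & circ_interval e].

Definition nonedge e u v : bool := [&& u != v, ~~ e u v & ~~ e v u].

Definition outdeg e v : nat := #|[set u | e v u]|.
Definition indeg e v : nat := #|[set u | e u v]|.

(* alpha_G is finite iff some non-edge exists *)
Definition alpha_finite e : bool := [exists p : 'I_n * 'I_n, nonedge e p.1 p.2].

(* minimum length of a non-edge (meaningful when alpha_finite e; all
   lengths are < n, so the default n plays no role in that case) *)
Definition alpha e : nat :=
  \big[minn/n]_(p : 'I_n * 'I_n | nonedge e p.1 p.2) dist p.1 p.2.

(* maximum length of an edge (0 if no edges) *)
Definition beta e : nat :=
  \max_(p : 'I_n * 'I_n | e p.1 p.2) dist p.1 p.2.

Definition xi e : nat :=
  #|[set q : ('I_n * 'I_n) * ('I_n * 'I_n) |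
      [&& e q.1.1 q.1.2, nonedge e q.2.1 q.2.2 &
          dist q.2.1 q.2.2 < dist q.1.1 q.1.2]]|.

Definition P3 e : nat :=
  #|[set t : 'I_n * 'I_n * 'I_n |
      [&& t.1.1 != t.1.2, t.1.2 != t.2, t.1.1 != t.2,
          e t.1.1 t.1.2, e t.1.2 t.2, ~~ e t.1.1 t.2 & ~~ e t.2 t.1.1]]|.

Definition optimal e : Prop :=
  [/\ valid e,
      forall e', valid e' -> P3 e' <= P3 e &
      forall e', valid e' -> P3 e' = P3 e -> xi e <= xi e'].

End Digraphs.

From mathcomp Require Import all_boot all_order zify.
Set Implicit Arguments. Unset Strict Implicit. Unset Printing Implicit Defensive.

(* In a circular interval digraph the out-neighbours of x are
   exactly the outdeg(x) vertices following x clockwise, so an edge xy has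
   length at most outdeg(x) and outdeg(x) <= beta.  For the lower bound let v
   have minimum out-degree m in a P3-maximal valid digraph G that has a
   non-edge, and suppose every pair of distinct vertices at distance <= m+1
   is adjacent.  The vertex w with d(v,w) = m+1 is then an in-neighbour of v,
   and wv is an "extremal" edge: removing it keeps G a valid digraph, keeps
   every induced 2-path of G, and creates the new induced 2-path
   (w, w+1, v) -- contradicting maximality.  Hence some non-edge has length
   <= m+1, i.e. alpha - 1 <= m <= outdeg(u) for all u.  In-degrees are
   handled by reversing the circle together with all edges, which preserves
   validity and P3.  Finally, the directed n-cycle shows P3 can be positive
   for n >= 4, and any induced 2-path yields a non-edge, so alpha is finite. *)

Lemma distP n (x y : 'I_n) :
  (x <= y /\ dist x y = y - x) \/ (y < x /\ dist x y = y + n - x).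
Proof.
have xn := ltn_ord x; have yn := ltn_ord y.
rewrite /dist; case: (leqP x y) => h; [left|right]; split => //.
- have -> : y + n - x = 1 * n + (y - x) by lia.
  rewrite modnMDl modn_small //; lia.
- rewrite modn_small //; lia.
Qed.

Ltac dist_cases x y := case: (distP x y) => -[? ?].

Section CircleArithmetic.
Variable n : nat.
Implicit Types (x y z : 'I_n).

Lemma dist_injr x y z : dist x y = dist x z -> y = z.
Proof.
move=> h; apply: ord_inj.
have := ltn_ord x; have := ltn_ord y; have := ltn_ord z.
by dist_cases x y; dist_cases x z; lia.
Qed.

Lemma dist_injl x y z : dist y x = dist z x -> y = z.
Proof.
move=> h; apply: ord_inj.
have := ltn_ord x; have := ltn_ord y; have := ltn_ord z.
by dist_cases y x; dist_cases z x; lia.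
Qed.

Lemma dist_gt0 x y : (0 < dist x y) = (x != y).
Proof.
rewrite -val_eqE /=; have := ltn_ord x; have := ltn_ord y.
by dist_cases x y; lia.
Qed.

Lemma dist_lt x y : dist x y < n.
Proof. by have := ltn_ord x; have := ltn_ord y; dist_cases x y; lia. Qed.

Lemma dist_pair x y : x != y -> dist x y + dist y x = n.
Proof.
rewrite -val_eqE /=; have := ltn_ord x; have := ltn_ord y.
by dist_cases x y; dist_cases y x; lia.
Qed.

Lemma dist_add x y z :
  dist x y + dist y z < n -> dist x z = dist x y + dist y z.
Proof.
have := ltn_ord x; have := ltn_ord y; have := ltn_ord z.
by dist_cases x y; dist_cases y z; dist_cases x z; lia.
Qed.

Lemma cw_dist x y z : cw x y z -> dist x y + dist y z = dist x z.
Proof.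
case/and4P => _ _ _.
have := ltn_ord x; have := ltn_ord y; have := ltn_ord z.
by dist_cases x y; dist_cases y z; dist_cases x z; lia.
Qed.

Lemma dist_exists x k : k < n -> exists y, dist x y = k.
Proof.
move=> kn; have xn := ltn_ord x.
have yn : (x + k) %% n < n by rewrite ltn_pmod //; lia.
have yv : nat_of_ord (Ordinal yn) = if x + k < n then x + k else x + k - n.
  rewrite /=; case: ifP => h; first by rewrite modn_small.
  have -> : x + k = 1 * n + (x + k - n) by lia.
  by rewrite modnMDl modn_small //; lia.
exists (Ordinal yn); have := ltn_ord (Ordinal yn).
by dist_cases x (Ordinal yn); move: yv; case: ifP; lia.
Qed.

End CircleArithmetic.

Lemma card_le_numbering (T : finType) (A : {set T}) (f : T -> nat) b :
  {in A &, injective f} -> {in A, forall u, 0 < f u <= b} -> #|A| <= b.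
Proof.
move=> finj fb; rewrite cardE -(size_map f) -(size_iota 1 b).
apply: uniq_leq_size.
  by rewrite map_inj_in_uniq ?enum_uniq // => u v; rewrite !mem_enum; apply: finj.
move=> k /mapP [u]; rewrite mem_enum => /fb uA ->; rewrite mem_iota; lia.
Qed.

Lemma card_ge_numbering (T : finType) (A : {set T}) (f : T -> nat) b :
  (forall k, 0 < k <= b -> exists2 u, u \in A & f u = k) -> b <= #|A|.
Proof.
move=> fsurj; rewrite cardE -(size_map f) -{1}(size_iota 1 b).
apply: uniq_leq_size; first exact: iota_uniq.
move=> k; rewrite mem_iota => kb; have [|u uA <-] := fsurj k; first lia.
by apply/mapP; exists u; rewrite ?mem_enum.
Qed.

Section IntervalStructure.
Variables (n : nat) (e : rel 'I_n).
Hypotheses (lo : loopless e) (ci : circ_interval e).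
Implicit Types (x y z : 'I_n).

Lemma edge_neq x y : e x y -> x != y.
Proof. by apply: contraTneq => ->; apply: lo. Qed.

(* If xz is an edge, every vertex strictly between x and z is an
   out-neighbour of x, so outdeg(x) >= d(x,z). *)
Lemma edge_dist_le_outdeg x z : e x z -> dist x z <= outdeg e x.
Proof.
move=> exz; apply: (card_ge_numbering (f := dist x)) => k /andP [k0 kd].
have [y dxy] := dist_exists x (leq_ltn_trans kd (dist_lt x z)).
exists y => //; rewrite inE.
have [lt | ge] := ltnP k (dist x z).
- have xyz : cw x y z.
    apply/and4P; split; last by rewrite dxy.
    - by rewrite -dist_gt0 dxy.
    - by apply: contraTneq lt => <-; rewrite dxy ltnn.
    - exact: edge_neq exz.
  by case/andP: (ci xyz exz).
- by rewrite (@dist_injr _ x y z) // dxy; apply/eqP; rewrite eqn_leq kd.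
Qed.

(* Conversely, if some vertex y with 0 < d(x,y) <= outdeg(x) were not an
   out-neighbour, all out-neighbours would lie strictly before y. *)
Lemma outdeg_le_edge x y : x != y -> dist x y <= outdeg e x -> e x y.
Proof.
move=> xy dle; apply/negPn/negP => nexy.
suff : outdeg e x <= (dist x y).-1 by have := dist_gt0 x y; rewrite xy; lia.
apply: (card_le_numbering (f := dist x)); first by move=> u w _ _; apply: dist_injr.
move=> z; rewrite inE => exz; rewrite dist_gt0 edge_neq //=.
rewrite -ltnS prednK ?dist_gt0 //; rewrite ltnNge; apply/negP => ge.
have yz : y != z by apply: contraNneq nexy => ->.
have xyz : cw x y z.
  apply/and4P; split => //; first exact: edge_neq.
  by rewrite ltn_neqAle ge andbT; apply: contra yz => /eqP/dist_injr ->.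
by case/andP: (ci xyz exz); rewrite (negbTE nexy).
Qed.

End IntervalStructure.

(* A minimum over a finite range is at most each of its terms (minn has no
   neutral element in nat, so this is not an instance of the monoid lemmas). *)
Lemma bigmin_le (I : finType) (P : pred I) (F : I -> nat) m j :
  P j -> \big[minn/m]_(i | P i) F i <= F j.
Proof.
move=> Pj; have : j \in index_enum I by rewrite mem_index_enum.
elim: (index_enum I) => [|i r IH] //; rewrite big_cons in_cons.
case/predU1P => [<-|jr]; first by rewrite Pj geq_minl.
by case: ifP => _; [apply: leq_trans (geq_minr _ _) (IH jr) | exact: IH].
Qed.

Section AlphaBeta.
Variables (n : nat) (e : rel 'I_n).
Implicit Types (x y v : 'I_n).

Lemma alpha_le x y : nonedge e x y -> alpha e <= dist x y.
Proof.
exact: (@bigmin_le _ (fun p => nonedge e p.1 p.2) (fun p => dist p.1 p.2) n (x, y)).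
Qed.

(* Out- and in-neighbours of v are numbered injectively by the lengths of
   the corresponding edges, which lie in 1..beta. *)
Lemma outdeg_le_beta v : loopless e -> outdeg e v <= beta e.
Proof.
move=> lo; apply: (card_le_numbering (f := dist v)).
  by move=> u w _ _; apply: dist_injr.
move=> u; rewrite inE => evu; rewrite dist_gt0 (edge_neq lo evu) /=.
exact: (leq_bigmax_cond (v, u)).
Qed.

Lemma indeg_le_beta v : loopless e -> indeg e v <= beta e.
Proof.
move=> lo; apply: (card_le_numbering (f := fun u => dist u v)).
  by move=> u w _ _; apply: dist_injl.
move=> u; rewrite inE => euv; rewrite dist_gt0 (edge_neq lo euv) /=.
exact: (leq_bigmax_cond (u, v)).
Qed.

End AlphaBeta.

Section Reversal.
Variable n : nat.
Implicit Types (x y z v : 'I_n) (e : rel 'I_n).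

(* The reflection x |-> -x (mod n) reverses the clockwise order. *)
Definition mirror x : 'I_n :=
  Ordinal (ltn_pmod (n - x) (leq_ltn_trans (leq0n x) (ltn_ord x))).
Arguments mirror : simpl never.

Lemma mirror_val x :
  (nat_of_ord x = 0 /\ nat_of_ord (mirror x) = 0) \/
  (0 < x /\ nat_of_ord (mirror x) = n - x).
Proof.
have xn := ltn_ord x; rewrite /mirror /=.
case: (posnP x) => x0; [left | right]; split => //; first by rewrite x0 subn0 modnn.
by rewrite modn_small //; lia.
Qed.

Lemma mirrorK : involutive mirror.
Proof.
move=> x; apply: ord_inj; have := ltn_ord x.
by case: (mirror_val x) (mirror_val (mirror x)) => -[? ?] [[? ?]|[? ?]]; lia.
Qed.

Lemma mirror_inj : injective mirror.
Proof. exact: inv_inj mirrorK. Qed.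

Lemma dist_mirror x y : dist (mirror x) (mirror y) = dist y x.
Proof.
have := ltn_ord x; have := ltn_ord y.
case: (mirror_val x) (mirror_val y) => -[? ?] [[? ?]|[? ?]];
by dist_cases (mirror x) (mirror y); dist_cases y x; lia.
Qed.

Lemma cw_mirror x y z : cw x y z -> cw (mirror z) (mirror y) (mirror x).
Proof.
move=> xyz; have dsum := cw_dist xyz; have dxz := dist_lt x z.
case/and4P: xyz => xy yz xz _; have dxy : 0 < dist x y by rewrite dist_gt0.
apply/and4P; rewrite !(inj_eq mirror_inj) (eq_sym z y) (eq_sym y x) (eq_sym z x).
by split => //; rewrite !dist_mirror; lia.
Qed.

(* The reverse digraph, drawn on the reflected circle. *)
Definition rev e : rel 'I_n := fun x y => e (mirror y) (mirror x).

Lemma valid_rev e : valid e -> valid (rev e).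
Proof.
case=> lo tf ci; split.
- by move=> x; apply: lo.
- by move=> x y xy; rewrite /rev andbC; apply: tf; rewrite (inj_eq mirror_inj).
- move=> x y z /cw_mirror xyz; rewrite /rev => /(ci _ _ _ xyz).
  by rewrite andbC.
Qed.

Lemma nonedge_rev e x y : nonedge (rev e) x y = nonedge e (mirror y) (mirror x).
Proof. by rewrite /nonedge /rev (inj_eq mirror_inj) eq_sym andbC -andbA andbC. Qed.

Lemma indeg_rev e v : indeg e v = outdeg (rev e) (mirror v).
Proof.
by rewrite /indeg /outdeg -(card_preimset _ mirror_inj); apply: eq_card => u;
   rewrite !inE /rev mirrorK.
Qed.

(* Reversal maps induced 2-paths (a,b,c) to induced 2-paths (c',b',a'). *)
Lemma P3_rev e : P3 (rev e) = P3 e.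
Proof.
pose s (t : 'I_n * 'I_n * 'I_n) := (mirror t.2, mirror t.1.2, mirror t.1.1).
have s_inj : injective s.
  by apply: (can_inj (g := s)) => -[[a b] c]; rewrite /s /= !mirrorK.
rewrite /P3 -(card_preimset _ s_inj); apply: eq_card => -[[a b] c].
by rewrite !inE /= /rev !mirrorK !(inj_eq mirror_inj) (eq_sym c b) (eq_sym b a)
   (eq_sym c a) andbCA (andbCA (e b c)).
Qed.

End Reversal.

Section EdgeRemoval.
Variables (n : nat) (e : rel 'I_n) (w v : 'I_n).
Hypothesis he : valid e.

Definition remove_edge : rel 'I_n := fun x y => e x y && ~~ ((x == w) && (y == v)).

Lemma valid_remove_edge :
  (forall z, cw w v z -> ~~ e w z) -> (forall x, cw x w v -> ~~ e x v) ->
  valid remove_edge.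
Proof.
move=> far_out far_in; case: he => lo tf ci; split.
- by move=> x; rewrite /remove_edge (negbTE (lo x)).
- by move=> x y xy; apply: contra (tf x y xy) => /andP [/andP [-> _] /andP [-> _]].
- move=> x y z xyz /andP [exz _]; have /andP [exy eyz] := ci _ _ _ xyz exz.
  rewrite /remove_edge exy eyz /=; apply/andP; split.
  + by apply/negP => /andP [/eqP xw /eqP yv]; subst; case/negP: (far_out _ xyz).
  + by apply/negP => /andP [/eqP yw /eqP zv]; subst; case/negP: (far_in _ xyz).
Qed.

(* If every out-neighbour c != w of v is adjacent to w, and every
   in-neighbour a != v of w is adjacent to v, then no induced 2-path of G
   uses the edge wv, so all of them survive in G - wv; moreover G - wv has
   the new induced 2-path (w, w+1, v) when d(w,v) >= 2. *)
Lemma P3_remove_edge :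
  e w v -> 1 < dist w v ->
  (forall c, c != w -> e v c -> e w c || e c w) ->
  (forall a, a != v -> e a w -> e a v || e v a) ->
  P3 e < P3 remove_edge.
Proof.
move=> ewv dwv out_adj in_adj; case: he => lo tf ci.
rewrite /P3; apply: proper_card; apply/properP; split.
  apply/subsetP => -[[a b] c]; rewrite !inE /=.
  case/and5P => ab bc ac eab /and3P [ebc nac nca].
  rewrite ab bc ac /remove_edge eab ebc (negbTE nac) (negbTE nca) /= !andbT.
  apply/andP; split; apply/negP => /andP [/eqP bw /eqP cv]; subst.
  - rewrite eq_sym in ac; move: (out_adj c ac ebc).
    by rewrite (negbTE nac) (negbTE nca).
  - by move: (in_adj a ac eab); rewrite (negbTE nac) (negbTE nca).
have [y dwy] := dist_exists w (ltn_trans dwv (dist_lt w v)).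
have wy : w != y by rewrite -dist_gt0 dwy.
have yv : y != v by apply: contraTneq dwv => <-; rewrite dwy.
have wv : w != v by rewrite -dist_gt0; apply: ltnW.
have /andP [ewy eyv] : e w y && e y v.
  by apply: (ci _ _ _ _ ewv); apply/and4P; split; rewrite // dwy.
have nevw : ~~ e v w by apply: contra (tf w v wv) => evw; rewrite ewv evw.
exists (w, y, v); rewrite !inE /=; last by rewrite ewv !andbF.
rewrite wy yv wv /remove_edge ewy eyv ewv (negbTE nevw) !eqxx /=.
by rewrite (negbTE yv) (eq_sym y) (negbTE wy).
Qed.

End EdgeRemoval.

Definition P3_maximal n (e : rel 'I_n) : Prop :=
  forall e' : rel 'I_n, valid e' -> P3 e' <= P3 e.

Section ExtremalEdge.
Variables (n : nat) (e : rel 'I_n) (v w : 'I_n).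
Hypothesis he : valid e.
Local Notation m := (outdeg e v).
Hypothesis vmin : forall u, m <= outdeg e u.
Hypothesis near : forall x y, x != y -> dist x y <= m.+1 -> e x y || e y x.
Hypothesis dvw : dist v w = m.+1.
Hypothesis long : m.+2 < n.

Let lo : loopless e. Proof. by case: he. Qed.
Let tf : two_free e. Proof. by case: he. Qed.
Let ci : circ_interval e. Proof. by case: he. Qed.

Let vw : v != w. Proof. by rewrite -dist_gt0 dvw. Qed.

Lemma dist_wv : dist w v = n - m.+1.
Proof. by have := dist_pair vw; rewrite dvw; lia. Qed.

(* wv is an edge and vw is not, as d(v,w) exceeds outdeg(v). *)
Lemma no_edge_vw : ~~ e v w.
Proof. by apply/negP => /(edge_dist_le_outdeg lo ci); rewrite dvw ltnn. Qed.

Lemma edge_wv : e w v.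
Proof. by case/orP: (near vw (eq_leq dvw)) => // evw; case/negP: no_edge_vw. Qed.

(* A vertex z beyond v seen from w satisfies d(z,w) <= m <= outdeg(z), so zw
   is an edge and wz is not. *)
Lemma farthest_out z : cw w v z -> ~~ e w z.
Proof.
move=> wvz; apply/negP => ewz.
have dsum := cw_dist wvz; have := dist_pair (edge_neq lo ewz).
have := dist_wv; case/and4P: wvz => _ vz _ _; rewrite -dist_gt0 in vz.
move=> dwv dpair; have zw : z != w by rewrite eq_sym (edge_neq lo ewz).
have ezw : e z w by apply: (outdeg_le_edge lo ci zw); apply: leq_trans (vmin z); lia.
by case/negP: (tf zw); rewrite ezw ewz.
Qed.

(* A vertex x before w seen from v satisfies d(v,x) <= m, so vx is an edge
   and xv is not. *)
Lemma farthest_in x : cw x w v -> ~~ e x v.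
Proof.
move=> xwv; apply/negP => exv.
have dsum := cw_dist xwv; have xv := edge_neq lo exv.
have := dist_pair xv; have := dist_wv; case/and4P: xwv => xw _ _ _.
rewrite -dist_gt0 in xw; move=> dwv dpair.
have evx : e v x by apply: (outdeg_le_edge lo ci); rewrite 1?eq_sym //; lia.
by case/negP: (tf xv); rewrite exv evx.
Qed.

(* Out-neighbours of v lie within distance m of w. *)
Lemma out_v_adj_w c : c != w -> e v c -> e w c || e c w.
Proof.
move=> cneq evc; have dvc := edge_dist_le_outdeg lo ci evc.
have vcw : cw v c w by apply/and4P; split; rewrite ?dvw ?(edge_neq lo evc).
have := cw_dist vcw; have := dist_gt0 v c; rewrite (edge_neq lo evc) dvw => ? ?.
by rewrite orbC; apply: near cneq _; lia.
Qed.

(* In-neighbours of w are either between w and v, hence in-neighbours of v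
   by the interval property, or within distance m of v. *)
Lemma in_w_adj_v a : a != v -> e a w -> e a v || e v a.
Proof.
move=> av eaw; have wa : w != a by rewrite eq_sym (edge_neq lo eaw).
have wv : w != v by rewrite eq_sym.
have [lt | ge] := ltnP (dist w a) (dist w v).
  have wav : cw w a v by apply/and4P; split; rewrite // eq_sym.
  by case/andP: (ci wav edge_wv) => _ ->.
have gt : dist w v < dist w a.
  by rewrite ltn_neqAle ge andbT; apply: contra av => /eqP/dist_injr ->.
have wva : cw w v a by apply/and4P; split; rewrite // eq_sym.
have := cw_dist wva; have := dist_lt w a; rewrite dist_wv => ? ?.
by rewrite orbC; apply: near; rewrite 1?eq_sym //; lia.
Qed.

Lemma remove_extremal_edge :
  valid (remove_edge e w v) /\ P3 e < P3 (remove_edge e w v).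
Proof.
split; first exact: valid_remove_edge he farthest_out farthest_in.
apply: P3_remove_edge he edge_wv _ out_v_adj_w in_w_adj_v.
by rewrite dist_wv; lia.
Qed.

End ExtremalEdge.

Lemma short_nonedge n (e : rel 'I_n) :
  valid e -> P3_maximal e -> alpha_finite e ->
  forall u, exists x y, nonedge e x y /\ dist x y <= (outdeg e u).+1.
Proof.
move=> he hmax /existsP [[p q] /= npq] u.
pose v := [arg min_(v < u) outdeg e v].
have vmin : forall u', outdeg e v <= outdeg e u'.
  by rewrite /v; case: arg_minnP => // x _ xmin u'; apply: xmin.
suff [x [y [nxy dxy]]] : exists x y, nonedge e x y /\ dist x y <= (outdeg e v).+1.
  by exists x, y; split => //; apply: leq_trans dxy _; apply: vmin.
have [/existsP [[x y] /andP [nxy dxy]] | ] :=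
  boolP [exists p : 'I_n * 'I_n, nonedge e p.1 p.2 && (dist p.1 p.2 <= (outdeg e v).+1)].
  by exists x, y.
rewrite negb_exists => /forallP far.
have near x y : x != y -> dist x y <= (outdeg e v).+1 -> e x y || e y x.
  move=> xy dxy; move: (far (x, y)); rewrite /nonedge /= xy dxy andbT.
  by rewrite -negb_or negbK.
have long_pair x y : nonedge e x y -> (outdeg e v).+1 < dist x y.
  case/and3P=> xy nexy neyx; rewrite ltnNge; apply/negP => /(near _ _ xy).
  by rewrite (negbTE nexy) (negbTE neyx).
have long : (outdeg e v).+2 < n.
  have qp : nonedge e q p.
    by case/and3P: (npq) => pq ? ?; apply/and3P; split; rewrite // eq_sym.
  have := long_pair _ _ npq; have := long_pair _ _ qp.
  by case/and3P: npq => /dist_pair; lia.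
have [w dvw] := dist_exists v (ltnW long).
have [valid' more] := remove_extremal_edge he vmin near dvw long.
by have := hmax _ valid'; rewrite leqNgt more.
Qed.

Section ReversalMaximality.
Variables (n : nat) (e : rel 'I_n).

Lemma P3_maximal_rev : P3_maximal e -> P3_maximal (rev e).
Proof.
by move=> hmax e' ve'; rewrite P3_rev -(P3_rev e'); apply: hmax (valid_rev ve').
Qed.

Lemma alpha_finite_rev : alpha_finite e -> alpha_finite (rev e).
Proof.
case/existsP => -[p q] /= npq; apply/existsP; exists (mirror q, mirror p).
by rewrite /= nonedge_rev !mirrorK.
Qed.

End ReversalMaximality.

Section Cycle.
Variable n : nat.

Definition cycle_digraph : rel 'I_n := fun x y => dist x y == 1.

Lemma valid_cycle : 2 < n -> valid cycle_digraph.
Proof.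
move=> n3; split.
- by move=> x; have := dist_gt0 x x; rewrite eqxx /cycle_digraph; case: (dist x x).
- move=> x y xy; apply/negP => /andP [/eqP dxy /eqP dyx].
  by have := dist_pair xy; rewrite dxy dyx; lia.
- move=> x y z /and4P [xy _ _ dlt] /eqP dxz; exfalso.
  by rewrite -dist_gt0 in xy; lia.
Qed.

(* For n >= 4 the path 0 -> 1 -> 2 is induced, since d(2,0) = n - 2 > 1. *)
Lemma P3_cycle_pos : 4 <= n -> 0 < P3 cycle_digraph.
Proof.
move=> n4; have n1 : 1 < n by lia.
pose x0 : 'I_n := Ordinal (ltnW n1).
have [x1 d01] := dist_exists x0 n1.
have [x2 d12] := dist_exists x1 n1.
have d02 : dist x0 x2 = 2 by rewrite (@dist_add _ x0 x1 x2) d01 d12 //; lia.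
have x02 : x0 != x2 by rewrite -dist_gt0 d02.
have d20 : dist x2 x0 = n - 2 by have := dist_pair x02; rewrite d02; lia.
apply/card_gt0P; exists (x0, x1, x2); rewrite inE /= /cycle_digraph.
rewrite -!dist_gt0 d01 d12 d02 d20 /=; apply/eqP; lia.
Qed.

End Cycle.

(* An induced 2-path (a, b, c) exhibits the non-edge ac. *)
Lemma P3_pos_alpha_finite n (e : rel 'I_n) : 0 < P3 e -> alpha_finite e.
Proof.
case/card_gt0P => -[[a b] c]; rewrite inE /=.
case/and5P => _ _ ac _ /and3P [_ nac nca].
by apply/existsP; exists (a, c); rewrite /nonedge /= ac nac nca.
Qed.

Theorem mainTheorem5 (n : nat) (e : rel 'I_n) :
  4 <= n -> optimal e ->
  alpha_finite e /\
  (forall v : 'I_n,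
     [/\ alpha e - 1 <= outdeg e v, outdeg e v <= beta e,
         alpha e - 1 <= indeg e v & indeg e v <= beta e]).
Proof.
move=> n4 [he hmax _]; have [lo _ _] := he.
have af : alpha_finite e.
  apply: P3_pos_alpha_finite; apply: leq_trans (P3_cycle_pos n4) _.
  by apply: hmax; apply: valid_cycle; lia.
split => // v; split; [| exact: outdeg_le_beta | | exact: indeg_le_beta].
- have [x [y [nxy dxy]]] := short_nonedge he hmax af v.
  by have := alpha_le nxy; lia.
- have [x [y []]] := short_nonedge (valid_rev he) (P3_maximal_rev hmax)
                       (alpha_finite_rev af) (mirror v).
  rewrite nonedge_rev -indeg_rev -dist_mirror => /alpha_le; lia.
Qed.
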